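(* Let $\alpha\in(0,1]$ and let $n$ be such that $n^\alpha=2^q$ for a positive integer $q$. Let $p\in B_n$ and let $p'=p+v$ where $v$ is one of the vectors $(\pm n^\alpha,0)$, $(0,\pm n^\alpha)$. If $p'\in\mathrm{conv}(B_n)$, then $p'\in B_n$.
   Context: Let $A_n=\{(i,j)\in\mathbb{Z}^2: 0\le i,j\le 14n\}$. The sparse grid $B_n\subseteq A_n$ is the set of points of $A_n$ of at least one of the following forms: (1) $(i,j)$ with $n^\alpha \mid ij$; (2) $(i+k,j+k)$ with $n^\alpha\mid i$, $n^\alpha\mid j$, $k\in\{1,\dots,n^\alpha\}$; (3) $(i+k,j-k)$ with $n^\alpha\mid i$, $n^\alpha\mid j$, $k\in\{1,\dots,n^\alpha\}$. $\mathrm{conv}(B_n)$ denotes the convex hull of $B_n$. *)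

From Stdlib Require Import Reals ZArith List Lra Lia.
Import ListNotations.
Open Scope R_scope.

Definition in_A (n : Z) (x y : Z) : Prop :=
  (0 <= x <= 14 * n)%Z /\ (0 <= y <= 14 * n)%Z.

(* The sparse grid B_n, where m stands for the integer n^alpha. *)
Definition in_B (n m : Z) (x y : Z) : Prop :=
  in_A n x y /\
  ( (m | x * y)%Z
  \/ (exists i j k : Z, (m | i)%Z /\ (m | j)%Z /\ (1 <= k <= m)%Z /\
        x = (i + k)%Z /\ y = (j + k)%Z)
  \/ (exists i j k : Z, (m | i)%Z /\ (m | j)%Z /\ (1 <= k <= m)%Z /\
        x = (i + k)%Z /\ y = (j - k)%Z) ).

Definition in_conv (S : Z -> Z -> Prop) (px py : R) : Prop :=
  exists l : list (R * (Z * Z)),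
    Forall (fun wp => 0 <= fst wp /\ S (fst (snd wp)) (snd (snd wp))) l /\
    fold_right Rplus 0 (map fst l) = 1 /\
    fold_right Rplus 0 (map (fun wp => fst wp * IZR (fst (snd wp))) l) = px /\
    fold_right Rplus 0 (map (fun wp => fst wp * IZR (snd (snd wp))) l) = py.

From Stdlib Require Import Reals ZArith List Lra Lia.
Open Scope R_scope.

(* Each of the three conditions defining B_n only involves residues modulo
   m = n^alpha, so B_n is invariant under translations by vectors of mZ^2 that
   stay inside A_n.  The point p' = p + v lies in conv(B_n), which is contained
   in the square A_n, and being a lattice point it lies in A_n; hence p' is in
   B_n. *)

Lemma in_B_translate (n m x y vx vy : Z) :
  (m | vx)%Z -> (m | vy)%Z ->
  in_B n m x y -> in_A n (x + vx) (y + vy) -> in_B n m (x + vx) (y + vy).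
Proof.
  intros [a ->] [b ->] [_ HB] HA. split; [exact HA|].
  destruct HB as [[c Hc] | [(i & j & k & Hi & Hj & Hk & -> & ->)
                           | (i & j & k & Hi & Hj & Hk & -> & ->)]].
  - left. exists (c + b * x + a * y + a * b * m)%Z. nia.
  - right; left. exists (i + a * m)%Z, (j + b * m)%Z, k.
    repeat split; try lia; apply Z.divide_add_r; auto using Z.divide_factor_r.
  - right; right. exists (i + a * m)%Z, (j + b * m)%Z, k.
    repeat split; try lia; apply Z.divide_add_r; auto using Z.divide_factor_r.
Qed.

Lemma weighted_sum_bounds (P : Z * Z -> Prop) (g : Z * Z -> R) (lo hi : R)
    (l : list (R * (Z * Z))) :
  (forall p, P p -> lo <= g p <= hi) ->
  Forall (fun wp => 0 <= fst wp /\ P (snd wp)) l ->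
  lo * fold_right Rplus 0 (map fst l) <=
    fold_right Rplus 0 (map (fun wp => fst wp * g (snd wp)) l) <=
  hi * fold_right Rplus 0 (map fst l).
Proof.
  intros Hg HF.
  induction HF as [|[w p] l [Hw HP] _ IH]; cbn in *; [lra|].
  destruct (Hg p HP). split; nra.
Qed.

Lemma in_conv_in_A (n : Z) (S : Z -> Z -> Prop) (x y : Z) :
  (forall a b, S a b -> in_A n a b) ->
  in_conv S (IZR x) (IZR y) -> in_A n x y.
Proof.
  intros HSA (l & HF & Hw & Hx & Hy).
  assert (Hbox : forall f : Z * Z -> Z, (forall a b, S a b -> (0 <= f (a, b) <= 14 * n)%Z) ->
            0 <= fold_right Rplus 0 (map (fun wp => fst wp * IZR (f (snd wp))) l)
              <= IZR (14 * n)).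
  { intros f Hf.
    pose proof (weighted_sum_bounds (fun p => S (fst p) (snd p)) (fun p => IZR (f p))
                  0 (IZR (14 * n)) l) as Hb.
    rewrite Hw, Rmult_0_l, Rmult_1_r in Hb. apply Hb; [|exact HF].
    intros [a b] Hab; destruct (Hf a b Hab).
    split; [apply (IZR_le 0)|apply IZR_le]; lia. }
  destruct (Hbox fst) as [Hx0 Hx1]; [intros a b Hab; apply (HSA a b Hab)|].
  destruct (Hbox snd) as [Hy0 Hy1]; [intros a b Hab; apply (HSA a b Hab)|].
  rewrite Hx in Hx0, Hx1; rewrite Hy in Hy0, Hy1.
  apply le_IZR in Hx0, Hx1, Hy0, Hy1. split; lia.
Qed.

Lemma axis_step_divisible (m vx vy : Z) :
  ((vx = m /\ vy = 0) \/ (vx = - m /\ vy = 0) \/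
   (vx = 0 /\ vy = m) \/ (vx = 0 /\ vy = - m))%Z ->
  (m | vx)%Z /\ (m | vy)%Z.
Proof.
  intros [[-> ->] | [[-> ->] | [[-> ->] | [-> ->]]]]; split;
    first [apply Z.divide_0_r | apply Z.divide_refl | apply Z.divide_opp_r, Z.divide_refl].
Qed.

Theorem lemma6 (alpha : R) (n q : nat) (x y vx vy : Z) :
  0 < alpha <= 1 ->
  (1 <= q)%nat ->
  Rpower (INR n) alpha = 2 ^ q ->
  in_B (Z.of_nat n) (2 ^ Z.of_nat q)%Z x y ->
  ((vx = 2 ^ Z.of_nat q /\ vy = 0) \/ (vx = - 2 ^ Z.of_nat q /\ vy = 0) \/
   (vx = 0 /\ vy = 2 ^ Z.of_nat q) \/ (vx = 0 /\ vy = - 2 ^ Z.of_nat q))%Z ->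
  in_conv (in_B (Z.of_nat n) (2 ^ Z.of_nat q)%Z) (IZR (x + vx)) (IZR (y + vy)) ->
  in_B (Z.of_nat n) (2 ^ Z.of_nat q)%Z (x + vx) (y + vy).
Proof.
  intros _ _ _ HB Hv Hconv.
  destruct (axis_step_divisible _ _ _ Hv) as [Hdx Hdy].
  apply in_B_translate; [exact Hdx | exact Hdy | exact HB |].
  exact (in_conv_in_A _ _ _ _ (fun a b Hab => proj1 Hab) Hconv).
Qed.
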